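(* Let $\mathcal{C}$ be a class of groups that contains a root class $\mathcal{R}$, and suppose that (1) $\mathcal{C}$ is closed under subgroups and finite direct products; (2) every $\mathcal{R}$-by-$\mathcal{C}$ group belongs to $\mathcal{C}$; (3) for every group in $\mathcal{C}$ there is a group in $\mathcal{R}$ of the same cardinality. Let $A$ be a residually $\mathcal{C}$ group and $H\leq A$ a finite subgroup. Then the special HNN extension $\langle A,t\mid t^{-1}ht=h\ \ \forall h\in H\rangle$ is residually $\mathcal{C}$.
   Context: A class of groups is a family of groups closed under isomorphism. A group $G$ is residually $\mathcal{C}$ if for every $g\in G\setminus\{e\}$ there exist $C\in\mathcal{C}$ and a surjective homomorphism $\varphi\colon G\to C$ with $\varphi(g)\neq e$. A root class is a non-trivial class $\mathcal{R}$ closed under subgroups and finite direct products satisfying the Gruenberg condition: for any chain $K\trianglelefteq H\trianglelefteq G$ with $G/H, H/K\in\mathcal{R}$ there is $L\trianglelefteq G$ with $L\subseteq K$ and $G/L\in\mathcal{R}$. A group is $\mathcal{A}$-by-$\mathcal{B}$ if it has a normal subgroup in $\mathcal{A}$ with quotient in $\mathcal{B}$. *)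

From Stdlib Require Import List ProofIrrelevance.

Set Implicit Arguments.

Record group := Group {
  carrier :> Type;
  gmul : carrier -> carrier -> carrier;
  gone : carrier;
  ginv : carrier -> carrier;
  gmulA : forall x y z, gmul x (gmul y z) = gmul (gmul x y) z;
  gmul1l : forall x, gmul gone x = x;
  gmul1r : forall x, gmul x gone = x;
  gmulVl : forall x, gmul (ginv x) x = gone;
  gmulVr : forall x, gmul x (ginv x) = gone }.

Arguments gmul {g}.
Arguments gone {g}.
Arguments ginv {g}.

Definition is_hom {G K : group} (f : G -> K) : Prop :=
  forall x y, f (gmul x y) = gmul (f x) (f y).

Definition injective {X Y : Type} (f : X -> Y) : Prop :=
  forall x y, f x = f y -> x = y.

Definition surjective {X Y : Type} (f : X -> Y) : Prop :=
  forall y, exists x, f x = y.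

Definition isomorphic (G K : group) : Prop :=
  exists f : G -> K, is_hom f /\ injective f /\ surjective f.

Definition same_card (G K : group) : Prop :=
  exists f : G -> K, injective f /\ surjective f.

Definition is_subgroup {G : group} (P : G -> Prop) : Prop :=
  P gone /\ (forall x y, P x -> P y -> P (gmul x y)) /\
  (forall x, P x -> P (ginv x)).

Definition is_normal {G : group} (N : G -> Prop) : Prop :=
  is_subgroup N /\ forall x g, N x -> N (gmul (ginv g) (gmul x g)).

Definition finite_subgroup {G : group} (P : G -> Prop) : Prop :=
  is_subgroup P /\ exists l : list G, forall x, P x -> In x l.

Section Sub.
Variables (G : group) (P : G -> Prop) (hP : is_subgroup P).

Definition sub_mul (x y : {x : G | P x}) : {x : G | P x} :=
  exist _ (gmul (proj1_sig x) (proj1_sig y))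
    (proj1 (proj2 hP) _ _ (proj2_sig x) (proj2_sig y)).
Definition sub_one : {x : G | P x} := exist _ gone (proj1 hP).
Definition sub_inv (x : {x : G | P x}) : {x : G | P x} :=
  exist _ (ginv (proj1_sig x)) (proj2 (proj2 hP) _ (proj2_sig x)).

Lemma sub_eq (x y : {x : G | P x}) : proj1_sig x = proj1_sig y -> x = y.
Proof.
  destruct x as [x px], y as [y py]; simpl; intros ->.
  f_equal; apply proof_irrelevance.
Qed.

Definition subgrp : group.
Proof.
  refine (@Group {x : G | P x} sub_mul sub_one sub_inv _ _ _ _ _);
  intros; apply sub_eq; simpl.
  - apply gmulA.
  - apply gmul1l.
  - apply gmul1r.
  - apply gmulVl.
  - apply gmulVr.
Defined.
End Sub.

Definition prodgrp (G K : group) : group.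
Proof.
  refine (@Group (G * K)%type
    (fun x y => (gmul (fst x) (fst y), gmul (snd x) (snd y)))
    (gone, gone) (fun x => (ginv (fst x), ginv (snd x))) _ _ _ _ _);
  intros; simpl;
  repeat match goal with p : (_ * _)%type |- _ => destruct p end; simpl;
  f_equal; auto using gmulA, gmul1l, gmul1r, gmulVl, gmulVr.
Defined.

Definition iso_closed (C : group -> Prop) : Prop :=
  forall G K, isomorphic G K -> C G -> C K.

Definition subgroup_closed (C : group -> Prop) : Prop :=
  forall (G : group) (P : G -> Prop) (hP : is_subgroup P), C G -> C (subgrp hP).

Definition product_closed (C : group -> Prop) : Prop :=
  forall G K, C G -> C K -> C (prodgrp G K).

(** "G/N belongs to C", for N a normal subgroup of G: there is a surjective
    homomorphism from G onto a group of C whose kernel is exactly N. *)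
Definition quotient_in (C : group -> Prop) (G : group) (N : G -> Prop) : Prop :=
  exists Q : group, C Q /\ exists f : G -> Q,
    is_hom f /\ surjective f /\ forall x, f x = gone <-> N x.

Definition gruenberg (R : group -> Prop) : Prop :=
  forall (G : group) (H K : G -> Prop) (hH : is_normal H),
    (forall x, K x -> H x) ->
    is_normal (G := subgrp (proj1 hH)) (fun x => K (proj1_sig x)) ->
    quotient_in R G H ->
    quotient_in R (subgrp (proj1 hH)) (fun x => K (proj1_sig x)) ->
    exists L : G -> Prop, is_normal L /\ (forall x, L x -> K x) /\ quotient_in R G L.

Definition nontrivial_class (R : group -> Prop) : Prop :=
  exists G : group, R G /\ exists x : G, x <> gone.

Definition root_class (R : group -> Prop) : Prop :=
  iso_closed R /\ nontrivial_class R /\ subgroup_closed R /\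
  product_closed R /\ gruenberg R.

Definition ext_by (A B : group -> Prop) (G : group) : Prop :=
  exists (N : G -> Prop) (hN : is_normal N),
    A (subgrp (proj1 hN)) /\ quotient_in B G N.

Definition residually (C : group -> Prop) (G : group) : Prop :=
  forall g : G, g <> gone -> exists Q : group, C Q /\
    exists f : G -> Q, is_hom f /\ surjective f /\ f g <> gone.

(** G (with i : A -> G and stable letter t) is the special HNN extension
    < A, t | t^-1 h t = h  (h in H) >, characterised by the universal property
    of the presentation. *)
Definition is_special_HNN (A : group) (H : A -> Prop) (G : group)
    (i : A -> G) (t : G) : Prop :=
  is_hom i /\
  (forall h, H h -> gmul (ginv t) (gmul (i h) t) = i h) /\
  (forall (K : group) (f : A -> K) (k : K), is_hom f ->
     (forall h, H h -> gmul (ginv k) (gmul (f h) k) = f h) ->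
     exists psi : G -> K, is_hom psi /\ (forall a, psi (i a) = f a) /\ psi t = k) /\
  (forall (K : group) (p1 p2 : G -> K), is_hom p1 -> is_hom p2 ->
     (forall a, p1 (i a) = p2 (i a)) -> p1 t = p2 t -> forall x, p1 x = p2 x).
Arguments is_special_HNN : clear implicits.

(* Let g <> 1 in the HNN extension G.  Letting G act on normal forms
   a0 t^e1 r1 ... t^en rn, with the ri coset representatives of H in A, shows that g has
   such a form.  As H is finite, one homomorphism f : A -> Q onto a group of C keeps a0
   and the finitely many elements h^-1 ri nontrivial.  Send A to Q in the wreath product
   P Wr Q and t to the base element x |-> mu (chosen representative of x f(H)); since
   this element commutes with f(H), we get a homomorphism of G.  The coordinate at
   f(a0)^-1 of the image of g is mu applied to a reduced word over the alphabet Q, and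
   free groups are residually R (through iterated wreath products of R-groups), so a
   suitable mu keeps it nontrivial.  Finally P Wr Q lies in C: it is R-by-C, its base
   P^Q being isomorphic to the base P^K of the R-group P Wr K, for K in R with
   |K| = |Q|. *)

From Stdlib Require Import List Classical ClassicalEpsilon FunctionalExtensionality
  ProofIrrelevance PropExtensionality PeanoNat Lia Bool Wf_nat.
Import ListNotations.

Arguments gmulA {g} x y z.
Arguments gmul1l {g} x.
Arguments gmul1r {g} x.
Arguments gmulVl {g} x.
Arguments gmulVr {g} x.

Definition dec (P : Prop) : {P} + {~ P} := excluded_middle_informative P.

Section GroupFacts.
Context {G : group}.
Implicit Types x y z : G.

Lemma mulg_injl a x y : gmul a x = gmul a y -> x = y.
Proof.
  intro E. rewrite <- (gmul1l x), <- (gmul1l y), <- (gmulVl a), <- !gmulA, E.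
  reflexivity.
Qed.

Lemma mulg_injr a x y : gmul x a = gmul y a -> x = y.
Proof.
  intro E. rewrite <- (gmul1r x), <- (gmul1r y), <- (gmulVr a), !gmulA, E.
  reflexivity.
Qed.

Lemma mulg_eq1_invr x y : gmul x y = gone -> y = ginv x.
Proof. intro E. apply (mulg_injl x). rewrite E, gmulVr. reflexivity. Qed.

Lemma invgK x : ginv (ginv x) = x.
Proof. symmetry. apply mulg_eq1_invr, gmulVl. Qed.

Lemma invg1 : ginv (gone : G) = gone.
Proof. symmetry. apply mulg_eq1_invr, gmul1l. Qed.

Lemma invgM x y : ginv (gmul x y) = gmul (ginv y) (ginv x).
Proof.
  symmetry. apply mulg_eq1_invr.
  rewrite gmulA, <- (gmulA x y), gmulVr, gmul1r, gmulVr. reflexivity.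
Qed.

Lemma invg_eq1 x : ginv x = gone -> x = gone.
Proof. intro E. rewrite <- (invgK x), E, invg1. reflexivity. Qed.

Lemma mulKg x y : gmul (ginv x) (gmul x y) = y.
Proof. rewrite gmulA, gmulVl, gmul1l. reflexivity. Qed.

Lemma mulKVg x y : gmul x (gmul (ginv x) y) = y.
Proof. rewrite gmulA, gmulVr, gmul1l. reflexivity. Qed.

Lemma mulgK x y : gmul (gmul y x) (ginv x) = y.
Proof. rewrite <- gmulA, gmulVr, gmul1r. reflexivity. Qed.

Lemma mulgKV x y : gmul (gmul y (ginv x)) x = y.
Proof. rewrite <- gmulA, gmulVl, gmul1r. reflexivity. Qed.

Fixpoint expg x (n : nat) : G :=
  match n with 0 => gone | S n => gmul (expg x n) x end.

Lemma expgD x m n : expg x (m + n) = gmul (expg x m) (expg x n).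
Proof.
  induction n as [|n IH]; simpl.
  - rewrite Nat.add_0_r, gmul1r. reflexivity.
  - rewrite Nat.add_succ_r; simpl. rewrite IH, gmulA. reflexivity.
Qed.

Lemma expgM x m n : expg x (m * n) = expg (expg x m) n.
Proof.
  induction n as [|n IH]; simpl.
  - rewrite Nat.mul_0_r. reflexivity.
  - rewrite Nat.mul_succ_r, expgD, IH. reflexivity.
Qed.

Lemma expg1n n : expg gone n = gone.
Proof. induction n as [|n IH]; simpl; [|rewrite IH, gmul1l]; reflexivity. Qed.

Lemma expgC x n : gmul (expg x n) x = gmul x (expg x n).
Proof.
  induction n as [|n IH]; simpl.
  - rewrite gmul1l, gmul1r. reflexivity.
  - rewrite (gmulA x), <- IH. reflexivity.
Qed.

Lemma expgVn x n : expg (ginv x) n = ginv (expg x n).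
Proof.
  induction n as [|n IH]; simpl.
  - rewrite invg1. reflexivity.
  - rewrite IH, expgC, invgM. reflexivity.
Qed.

End GroupFacts.

Section Homomorphisms.
Context {G K : group} (f : G -> K) (hf : is_hom f).

Lemma hom1 : f gone = gone.
Proof. apply (mulg_injl (f gone)). rewrite <- hf, !gmul1r. reflexivity. Qed.

Lemma homV x : f (ginv x) = ginv (f x).
Proof. apply mulg_eq1_invr. rewrite <- hf, gmulVr. exact hom1. Qed.

Lemma hom_injective_ker : (forall x, f x = gone -> x = gone) -> injective f.
Proof.
  intros hker x y E. apply (mulg_injr (ginv y)). rewrite gmulVr. apply hker.
  rewrite hf, homV, E. apply gmulVr.
Qed.

Lemma isomorphic_of_bijective_hom : injective f -> surjective f -> isomorphic K G.
Proof.
  intros hi hs.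
  pose (g y := proj1_sig (constructive_indefinite_description _ (hs y))).
  assert (fgK : forall y, f (g y) = y)
    by (intro y; exact (proj2_sig (constructive_indefinite_description _ (hs y)))).
  exists g. split; [|split].
  - intros x y. apply hi. rewrite hf, !fgK. reflexivity.
  - intros x y E. rewrite <- (fgK x), <- (fgK y), E. reflexivity.
  - intro x. exists (f x). apply hi, fgK.
Qed.

Lemma image_subgroup : is_subgroup (fun y => exists x, f x = y).
Proof.
  split; [|split].
  - exists gone. exact hom1.
  - intros y z [a <-] [b <-]. exists (gmul a b). apply hf.
  - intros y [a <-]. exists (ginv a). apply homV.
Qed.

End Homomorphisms.

Section Subgroups.
Context {G : group} {H : G -> Prop} (hH : is_subgroup H).

Lemma subgroup1 : H gone.
Proof. apply hH. Qed.

Lemma subgroupM x y : H x -> H y -> H (gmul x y).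
Proof. apply hH. Qed.

Lemma subgroupV x : H x -> H (ginv x).
Proof. apply hH. Qed.

End Subgroups.

Lemma trivial_normal (G : group) : is_normal (fun x : G => x = gone).
Proof.
  split; [split; [|split]|].
  - reflexivity.
  - intros x y -> ->. apply gmul1l.
  - intros x ->. apply invg1.
  - intros x g ->. rewrite gmul1l. apply gmulVl.
Qed.

Section ResiduallyC.
Variables (C : group -> Prop) (hCs : subgroup_closed C).

Lemma hom_onto_image {G W : group} (f : G -> W) : is_hom f -> C W ->
  exists Q : group, C Q /\ exists g : G -> Q, is_hom g /\ surjective g /\
    forall x, g x = gone <-> f x = gone.
Proof.
  intros hf hW. pose proof (image_subgroup f hf) as hI.
  exists (subgrp hI). split; [apply hCs, hW|].
  exists (fun x => exist _ (f x) (ex_intro _ x eq_refl)). split; [|split].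
  - intros x y. apply sub_eq, hf.
  - intros [y [x E]]. exists x. apply sub_eq, E.
  - intro x. split; intro E.
    + exact (f_equal (@proj1_sig _ _) E).
    + apply sub_eq, E.
Qed.

Lemma residually_of_homs (G : group) :
  (forall g : G, g <> gone -> exists W, C W /\ exists f : G -> W, is_hom f /\ f g <> gone) ->
  residually C G.
Proof.
  intros hsep g hg. destruct (hsep g hg) as [W [hW [f [hf hfg]]]].
  destruct (hom_onto_image f hf hW) as [Q [hQ [q [hq [hqs hqk]]]]].
  exists Q. split; [exact hQ|]. exists q. split; [exact hq|]. split; [exact hqs|].
  rewrite hqk. exact hfg.
Qed.

Variable (hCp : product_closed C).

Lemma class_has_trivial_group (T : group) : C T -> exists Z, C Z /\ forall x y : Z, x = y.
Proof.
  intro hT. exists (subgrp (proj1 (trivial_normal T))). split; [apply hCs, hT|].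
  intros [x hx] [y hy]. apply sub_eq. simpl. congruence.
Qed.

Lemma residually_separates_list (A : group) (T : group) : C T -> residually C A ->
  forall S : list A, exists Q, C Q /\ exists f : A -> Q, is_hom f /\
    forall x, In x S -> x <> gone -> f x <> gone.
Proof.
  intros hT hA S. induction S as [|x S IH].
  - destruct (class_has_trivial_group T hT) as [Z [hZ hZ1]].
    exists Z. split; [exact hZ|]. exists (fun _ => gone). split; [intros a b; apply hZ1|].
    intros _ [].
  - destruct IH as [Q1 [hQ1 [f1 [hf1 hk1]]]].
    destruct (classic (x = gone)) as [Ex|Ex].
    + exists Q1. split; [exact hQ1|]. exists f1. split; [exact hf1|].
      intros y [<-|Hy] Hn; [contradiction|]. auto.
    + destruct (hA x Ex) as [Q2 [hQ2 [f2 [hf2 [_ hk2]]]]].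
      exists (prodgrp Q1 Q2). split; [apply hCp; assumption|].
      exists (fun a => (f1 a, f2 a)). split.
      * intros a b. rewrite hf1, hf2. reflexivity.
      * intros y [<-|Hy] Hn E; [exact (hk2 (f_equal snd E))|].
        exact (hk1 y Hy Hn (f_equal fst E)).
Qed.

End ResiduallyC.

(** * Wreath products in a root class *)

Section Wreath.
Variables P Q : group.

Definition wr_mul (a b : (Q -> P) * Q) : (Q -> P) * Q :=
  (fun x => gmul (fst a x) (fst b (gmul x (snd a))), gmul (snd a) (snd b)).

Definition wr_inv (a : (Q -> P) * Q) : (Q -> P) * Q :=
  (fun x => ginv (fst a (gmul x (ginv (snd a)))), ginv (snd a)).

(* The unrestricted wreath product P^Q ⋊ Q, with Q acting on P^Q by right translation. *)
Definition wr : group.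
Proof.
  refine (@Group ((Q -> P) * Q)%type wr_mul (fun _ => gone, gone) wr_inv _ _ _ _ _);
  intros; repeat match goal with p : (_ * _)%type |- _ => destruct p end;
  unfold wr_mul, wr_inv; simpl; f_equal; try apply functional_extensionality; intros;
  rewrite ?gmulA, ?gmul1l, ?gmul1r, ?mulgK, ?mulgKV, ?gmulVl, ?gmulVr;
  reflexivity.
Defined.

Lemma wr_base_normal : is_normal (fun a : wr => snd a = gone).
Proof.
  split; [split; [|split]|].
  - reflexivity.
  - intros x y Ex Ey. simpl. rewrite Ex, Ey. apply gmul1l.
  - intros x Ex. simpl. rewrite Ex. apply invg1.
  - intros x g Ex. simpl. rewrite Ex, gmul1l. apply gmulVl.
Qed.

Lemma wr_quotient_base (C : group -> Prop) : C Q ->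
  quotient_in C wr (fun a => snd a = gone).
Proof.
  intro hQ. exists Q. split; [exact hQ|]. exists (@snd _ _). split; [|split].
  - intros x y. reflexivity.
  - intro q. exists (fun _ => gone, q). reflexivity.
  - intro x. reflexivity.
Qed.

End Wreath.

Arguments wr_base_normal {P Q}.

Section RootClass.
Variables (R : group -> Prop) (hR : root_class R).

(* Gruenberg gives a normal L ⊆ K with G/L in R, and L is trivial by core-freeness. *)
Lemma root_class_of_core_free (G : group) (N K : G -> Prop) (hN : is_normal N) :
  (forall x, K x -> N x) ->
  is_normal (G := subgrp (proj1 hN)) (fun x => K (proj1_sig x)) ->
  quotient_in R G N ->
  quotient_in R (subgrp (proj1 hN)) (fun x => K (proj1_sig x)) ->
  (forall L : G -> Prop, is_normal L -> (forall x, L x -> K x) -> forall x, L x -> x = gone) ->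
  R G.
Proof.
  intros hKN hK hGN hNK hcore. destruct hR as [hiso [_ [_ [_ hgr]]]].
  destruct (hgr G N K hN hKN hK hGN hNK) as [L [hL [hLK [Q [hQ [f [hf [hfs hfk]]]]]]]].
  assert (hfi : injective f).
  { apply (hom_injective_ker f hf). intros x Ex. apply (hcore L hL hLK), hfk, Ex. }
  apply (hiso Q G); [|exact hQ].
  exact (isomorphic_of_bijective_hom f hf hfi hfs).
Qed.

Lemma root_class_wr (P Q : group) : R P -> R Q -> R (wr P Q).
Proof.
  intros hP hQ.
  set (K := fun a : wr P Q => snd a = gone /\ fst a gone = gone).
  apply (root_class_of_core_free _ _ K wr_base_normal).
  - intros x [E _]. exact E.
  - unfold K. split; [split; [|split]|].
    + split; reflexivity.
    + intros [x hx] [y hy] [Ex1 Ex2] [Ey1 Ey2]. simpl in *. split.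
      * rewrite Ex1, Ey1. apply gmul1l.
      * rewrite Ex1, gmul1r, Ex2, Ey2. apply gmul1l.
    + intros [x hx] [Ex1 Ex2]. simpl in *. split.
      * rewrite Ex1. apply invg1.
      * rewrite Ex1, invg1, gmul1r, Ex2. apply invg1.
    + intros [x hx] [g hg] [Ex1 Ex2]. simpl in *.
      rewrite hg, Ex1, invg1, !gmul1l, Ex2, gmul1l.
      split; [reflexivity|apply gmulVl].
  - apply wr_quotient_base, hQ.
  - exists P. split; [exact hP|]. exists (fun x => fst (proj1_sig x) gone). split; [|split].
    + intros [x hx] [y hy]. simpl. rewrite gmul1l, hx. reflexivity.
    + intro p. exists (exist (fun a : wr P Q => snd a = gone) (fun _ => p, gone) eq_refl).
      reflexivity.
    + intros [x hx]. simpl. unfold K. tauto.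
  - (* conjugating by (1, w^-1) moves the coordinate at w to the coordinate at 1 *)
    intros L hL hLK [x1 x2] Ex.
    assert (E2 : x2 = gone) by exact (proj1 (hLK _ Ex)). subst x2.
    assert (E1 : forall w, x1 w = gone).
    { intro w. destruct (hLK _ (proj2 hL _ (fun _ => gone, ginv w) Ex)) as [_ Ec].
      simpl in Ec. rewrite invg1, !gmul1l, gmul1r, invgK in Ec. exact Ec. }
    change ((x1, gone) = (fun _ : Q => gone : P, gone : Q)). f_equal.
    apply functional_extensionality, E1.
Qed.

Definition has_order {G : group} (z : G) (N : nat) : Prop :=
  1 < N /\ expg z N = gone /\ forall L, 1 <= L < N -> expg z L <> gone.

Definition dirac {P : group} (z y : P) : P := if dec (y = gone) then z else gone.

Fixpoint dirac_orbit_prod {P : group} (z : P) (k : nat) (x : P) : P :=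
  match k with
  | 0 => gone
  | S k => gmul (dirac_orbit_prod z k x) (dirac z (gmul x (expg z k)))
  end.

Section LargeOrder.
Variables (P : group) (z : P).

Lemma expg_wr_dirac k :
  expg (G := wr P P) (dirac z, z) k = (dirac_orbit_prod z k, expg z k).
Proof. induction k as [|k IH]; simpl; [|rewrite IH]; reflexivity. Qed.

Lemma dirac_orbit_prod_expg k x : exists c, dirac_orbit_prod z k x = expg z c.
Proof.
  induction k as [|k [c Hc]]; simpl; [exists 0; reflexivity|].
  rewrite Hc. unfold dirac. destruct (dec _).
  - exists (S c). reflexivity.
  - exists c. apply gmul1r.
Qed.

Variables (N : nat) (hzN : expg z N = gone).

Lemma dirac_orbit_prodD a r x :
  dirac_orbit_prod z (N * a + r) x =
  gmul (dirac_orbit_prod z (N * a) x) (dirac_orbit_prod z r x).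
Proof.
  induction r as [|r IH]; simpl.
  - rewrite Nat.add_0_r, gmul1r. reflexivity.
  - rewrite Nat.add_succ_r. simpl. rewrite IH, <- gmulA.
    rewrite expgD, expgM, hzN, expg1n, gmul1l. reflexivity.
Qed.

Lemma dirac_orbit_prodM a x :
  dirac_orbit_prod z (N * a) x = expg (dirac_orbit_prod z N x) a.
Proof.
  induction a as [|a IH]; [rewrite Nat.mul_0_r; reflexivity|].
  rewrite Nat.mul_succ_r, dirac_orbit_prodD. simpl. rewrite IH. reflexivity.
Qed.

Lemma dirac_orbit_prod_at1 r : has_order z N -> 1 <= r <= N -> dirac_orbit_prod z r gone = z.
Proof.
  intros [_ [_ hmin]]. induction r as [|[|r] IH]; intro Hr; [lia| |].
  - simpl. unfold dirac. rewrite !gmul1l. destruct (dec _) as [_|n]; [reflexivity|].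
    contradiction (n eq_refl).
  - simpl dirac_orbit_prod. simpl in IH. rewrite IH by lia. unfold dirac.
    destruct (dec _) as [e|_]; [|apply gmul1r].
    rewrite gmul1l in e. contradiction (hmin (S r) ltac:(lia) e).
Qed.

(* The top coordinate forces N | L, and then the base coordinate at 1 is z^(L/N). *)
Lemma has_order_wr_dirac : has_order z N -> has_order (G := wr P P) (dirac z, z) (N * N).
Proof.
  intro hz. pose proof hz as [hN1 [_ hmin]]. split; [|split].
  - nia.
  - rewrite expg_wr_dirac.
    change (gone : wr P P) with ((fun _ : P => (gone : P)), (gone : P)). f_equal.
    + apply functional_extensionality. intro x. rewrite dirac_orbit_prodM.
      destruct (dirac_orbit_prod_expg N x) as [c ->].
      rewrite <- expgM, Nat.mul_comm, expgM, hzN. apply expg1n.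
    + rewrite expgM, hzN. apply expg1n.
  - intros L HL E. rewrite expg_wr_dirac in E.
    assert (E1 := f_equal (fun p => fst p gone) E). assert (E2 := f_equal snd E).
    simpl in E1, E2.
    rewrite (Nat.div_mod_eq L N), expgD, expgM, hzN, expg1n, gmul1l in E2.
    destruct (L mod N) as [|r] eqn:Er.
    + rewrite (Nat.div_mod_eq L N), Er, Nat.add_0_r, dirac_orbit_prodM,
        dirac_orbit_prod_at1 in E1 by (auto; lia).
      pose proof (Nat.div_mod_eq L N) as HL'. rewrite Er in HL'.
      apply (hmin (L / N)); [|exact E1]. split; [destruct (L / N); lia|].
      destruct (Nat.lt_ge_cases (L / N) N); [assumption|nia].
    + pose proof (Nat.mod_upper_bound L N). apply (hmin (S r)); [lia|exact E2].
Qed.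

End LargeOrder.

Lemma root_class_large_order n :
  exists D, R D /\ exists d : D, forall L, 1 <= L <= n -> expg d L <> gone.
Proof.
  pose proof hR as [_ [[P0 [HP0 [z Hz]]] _]].
  destruct (classic (exists L, 1 <= L /\ expg z L = gone)) as [Hex|Hno].
  2:{ exists P0. split; [exact HP0|]. exists z. intros L HL E. apply Hno. exists L. split; [lia|exact E]. }
  destruct (dec_inh_nat_subset_has_unique_least_element _ (fun n => classic _) Hex)
    as [N [[[HN1 HN2] HNmin] _]].
  assert (hzN : has_order z N).
  { split; [|split; [exact HN2|]].
    - destruct N as [|[|N]]; [lia| |lia]. simpl in HN2. rewrite gmul1l in HN2. contradiction.
    - intros L HL E. specialize (HNmin L (conj (proj1 HL) E)). lia. }
  assert (Hgrow : forall m, exists D, R D /\ exists (d : D) M, has_order d M /\ m < M).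
  { induction m as [|m [D [HD [d [M [HM HmM]]]]]].
    - exists P0. split; [exact HP0|]. exists z, N. split; [exact hzN|]. destruct hzN; lia.
    - exists (wr D D). split; [apply root_class_wr; assumption|].
      exists (dirac d, d), (M * M). split; [apply has_order_wr_dirac; [apply HM|exact HM]|].
      destruct HM. nia. }
  destruct (Hgrow n) as [D [HD [d [M [[_ [_ HM]] HnM]]]]].
  exists D. split; [exact HD|]. exists d. intros L HL. apply HM. lia.
Qed.

(** * Free groups are residually R *)

Definition signg {G : group} (b : bool) (x : G) : G := if b then x else ginv x.

Fixpoint eval_word {X : Type} {G : group} (mu : X -> G) (w : list (X * bool)) : G :=
  match w with
  | [] => gone
  | (c, b) :: w' => gmul (signg b (mu c)) (eval_word mu w')
  end.

Fixpoint reduced {X : Type} (w : list (X * bool)) : Prop :=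
  match w with
  | [] => True
  | a :: w' =>
      match w' with [] => True | b :: _ => ~ (fst a = fst b /\ snd b = negb (snd a)) end
      /\ reduced w'
  end.

Lemma reduced_cons {X} (a : X * bool) w : reduced (a :: w) -> reduced w.
Proof. simpl. tauto. Qed.

Lemma reduced_app_r {X} (u v : list (X * bool)) : reduced (u ++ v) -> reduced v.
Proof. induction u as [|a u IH]; [auto|]. intro H. apply IH, (reduced_cons a), H. Qed.

Lemma signg1 {G : group} b : signg b (gone : G) = gone.
Proof. destruct b; [reflexivity|apply invg1]. Qed.

Definition signed_expg {G : group} (d : G) (s : bool) (k : nat) : G := signg s (expg d k).

Lemma signed_expgS {G : group} (d : G) s k :
  gmul (signed_expg d s k) (signg s d) = signed_expg d s (S k).
Proof. destruct s; [reflexivity|]. unfold signed_expg; simpl. rewrite <- invgM, expgC. reflexivity. Qed.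

Lemma signed_expg0 {G : group} (d : G) s : signed_expg d s 0 = gone.
Proof. apply signg1. Qed.

Lemma eval_word_const {X} {G : group} (mu : X -> G) c b w :
  (forall a, In a w -> a = (c, b)) -> eval_word mu w = expg (signg b (mu c)) (length w).
Proof.
  induction w as [|a w IH]; intro H; [reflexivity|].
  rewrite (H a (or_introl eq_refl)). simpl.
  rewrite IH, expgC by (intros; apply H; right; assumption). reflexivity.
Qed.

Lemma reduced_one_letter {X} (c : X) b w :
  reduced ((c, b) :: w) -> (forall a, In a w -> fst a = c) ->
  forall a, In a ((c, b) :: w) -> a = (c, b).
Proof.
  revert b. induction w as [|[c' b'] w IH]; intros b Hr Hc a Ha.
  - destruct Ha as [<-|[]]. reflexivity.
  - destruct Ha as [<-|Ha]; [reflexivity|].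
    assert (c' = c) by exact (Hc (c', b') (or_introl eq_refl)). subst c'.
    destruct Hr as [Hn Hr].
    assert (b' = b) by (destruct b, b'; simpl in *; tauto). subst b'.
    apply (IH b Hr); [intros; apply Hc; right|]; assumption.
Qed.

Lemma repeat_app_cons {A} (x : A) k l : repeat x k ++ x :: l = x :: repeat x k ++ l.
Proof. induction k as [|k IH]; simpl; [|rewrite IH]; reflexivity. Qed.

(* Deletes the letter cs, recording the accumulated power g of d in every other letter. *)
Fixpoint absorb {X : Type} {D : group} (cs : X) (d g : D) (w : list (X * bool))
  : list ((X * D) * bool) :=
  match w with
  | [] => []
  | (c, b) :: w' => if dec (c = cs) then absorb cs d (gmul g (signg b d)) w'
                    else ((c, g), b) :: absorb cs d g w'
  end.

Lemma absorb_length {X} {D : group} (cs : X) (d : D) g w :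
  length (absorb cs d g w) <= length w.
Proof.
  revert g. induction w as [|[c b] w IH]; intro g; simpl; [lia|].
  destruct (dec _); simpl; [specialize (IH (gmul g (signg b d)))|specialize (IH g)]; lia.
Qed.

Lemma absorb_nonempty {X} {D : group} (cs : X) (d : D) g w :
  (exists a, In a w /\ fst a <> cs) -> absorb cs d g w <> [].
Proof.
  revert g. induction w as [|[c b] w IH]; intros g [a [Ha Hn]]; [destruct Ha|]. simpl.
  destruct (dec _) as [e|n]; [|discriminate].
  apply IH. destruct Ha as [<-|Ha]; [contradiction|eauto].
Qed.

Definition head_not_inverse {X D : Type} (c : X) (g : D) (e : bool)
    (l : list ((X * D) * bool)) : Prop :=
  match l with [] => True | y :: _ => ~ (fst y = (c, g) /\ snd y = negb e) end.

(* Between two letters c of w, the deleted run (cs^s)^k contributes d^(±k) <> 1 to the label. *)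
Lemma absorb_head {X} {D : group} (cs : X) (d : D) w :
  forall c e k s g, c <> cs ->
  reduced ((c, e) :: repeat (cs, s) k ++ w) ->
  (forall j, 1 <= j <= k + length w -> expg d j <> gone) ->
  head_not_inverse c g e (absorb cs d (gmul g (signed_expg d s k)) w).
Proof.
  induction w as [|[c' b'] w IH]; intros c e k s g Hc Hr Hbig; simpl; [exact I|].
  destruct (dec (c' = cs)) as [E|E].
  - subst c'. rewrite <- gmulA.
    assert (Hs : k = 0 \/ b' = s).
    { destruct k as [|k]; [now left|right].
      assert (Hr' : reduced ((cs, s) :: (cs, b') :: w)).
      { apply (reduced_app_r ((c, e) :: repeat (cs, s) k)). cbn [app].
        rewrite repeat_app_cons. exact Hr. }
      destruct Hr' as [Hn _]. destruct b', s; simpl in *; tauto. }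
    destruct Hs as [-> | ->].
    + rewrite signed_expg0, gmul1l.
      specialize (IH c e 1 b' g Hc). unfold signed_expg in IH. simpl in IH.
      rewrite gmul1l in IH. apply IH; [exact Hr|intros j Hj; apply Hbig; simpl; lia].
    + rewrite signed_expgS. apply IH; [exact Hc| |intros j Hj; apply Hbig; simpl; lia].
      rewrite repeat_app_cons in Hr. exact Hr.
  - simpl. intros [E1 E2]. injection E1 as -> E3.
    destruct k as [|k].
    + destruct Hr as [Hn _]. apply Hn. simpl. tauto.
    + assert (E4 : signed_expg d s (S k) = gone).
      { apply (mulg_injl g). rewrite gmul1r. exact E3. }
      apply (Hbig (S k)); [simpl; lia|].
      destruct s; [exact E4|apply invg_eq1, E4].
Qed.

Lemma absorb_reduced {X} {D : group} (cs : X) (d : D) w :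
  forall g, reduced w -> (forall j, 1 <= j <= length w -> expg d j <> gone) ->
  reduced (absorb cs d g w).
Proof.
  induction w as [|[c b] w IH]; intros g Hr Hbig; simpl; [exact I|].
  assert (Hbig' : forall j, 1 <= j <= length w -> expg d j <> gone)
    by (intros j Hj; apply Hbig; simpl; lia).
  destruct (dec (c = cs)) as [E|E].
  - apply IH; [apply (reduced_cons _ _ Hr)|exact Hbig'].
  - split; [|apply IH; [apply (reduced_cons _ _ Hr)|exact Hbig']].
    pose proof (absorb_head cs d w c b 0 true g E Hr Hbig') as H.
    rewrite signed_expg0, gmul1r in H.
    destruct (absorb cs d g w); [exact I|]. intros [E1 E2]. exact (H (conj (eq_sym E1) E2)).
Qed.

Lemma absorb_eval {X} {P D : group} (cs : X) (d : D) (mu : X * D -> P) w g :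
  fst (eval_word (G := wr P D)
      (fun c => if dec (c = cs) then (fun _ => gone, d) else (fun x => mu (c, x), gone)) w) g
  = eval_word mu (absorb cs d g w).
Proof.
  revert g. induction w as [|[c b] w IH]; intro g; simpl; [reflexivity|].
  destruct (dec (c = cs)); simpl; rewrite <- IH; destruct b; simpl;
    rewrite ?invg1, ?gmul1l, ?gmul1r; reflexivity.
Qed.

(* If w only uses its first letter cs, it is cs^(±|w|), detected
   by any d of order > |w|.  Otherwise send cs to (1, d), with d of large order, and every
   other letter c to (x |-> mu (c, x), 1) in P Wr D: the coordinate at 1 of the image of w
   is the image of the shorter reduced word [absorb cs d 1 w]. *)
Lemma reduced_word_separated (X : Type) (w : list (X * bool)) :
  w <> [] -> reduced w -> exists P, R P /\ exists mu : X -> P, eval_word mu w <> gone.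
Proof.
  remember (length w) as n eqn:Hn. assert (Hl : length w <= n) by lia. clear Hn.
  revert X w Hl. induction n as [|n IHn]; intros X w Hl Hne Hr.
  { destruct w; simpl in Hl; [contradiction|lia]. }
  destruct w as [|[cs b0] w']; [contradiction|].
  destruct (root_class_large_order (length ((cs, b0) :: w'))) as [D [HD [d Hd]]].
  destruct (classic (exists a, In a ((cs, b0) :: w') /\ fst a <> cs)) as [Hex|Hall].
  - set (w2 := absorb cs d gone ((cs, b0) :: w')).
    assert (Hl2 : length w2 <= n).
    { unfold w2. simpl. destruct (dec (cs = cs)) as [_|n0]; [|contradiction].
      pose proof (absorb_length cs d (gmul gone (signg b0 d)) w'). simpl in Hl. lia. }
    destruct (IHn _ w2 Hl2) as [P' [HP' [mu' Hmu']]];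
      [apply absorb_nonempty, Hex|apply absorb_reduced; assumption|].
    exists (wr P' D). split; [apply root_class_wr; assumption|].
    exists (fun c => if dec (c = cs) then (fun _ => gone, d) else (fun x => mu' (c, x), gone)).
    intro E. apply Hmu'. unfold w2. rewrite <- absorb_eval.
    exact (f_equal (fun p : wr P' D => fst p gone) E).
  - exists D. split; [exact HD|]. exists (fun _ => d).
    rewrite (eval_word_const (fun _ : X => d) cs b0).
    + intro E. apply (Hd (length ((cs, b0) :: w'))); [simpl; lia|].
      destruct b0; [exact E|]. simpl signg in E. rewrite expgVn in E. apply invg_eq1, E.
    + apply reduced_one_letter; [exact Hr|]. intros a Ha. apply NNPP. intro Hn.
      apply Hall. exists a. split; [right|]; assumption.
Qed.

End RootClass.

(** * Normal forms in special HNN extensions *)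

Section Permutations.
Variable X : Type.

Definition isperm (p : (X -> X) * (X -> X)) : Prop :=
  (forall x, fst p (snd p x) = x) /\ (forall x, snd p (fst p x) = x).

Definition sym_mul (p q : {p | isperm p}) : {p | isperm p}.
Proof.
  destruct p as [[f f'] [H1 H2]], q as [[g g'] [K1 K2]].
  exists (fun x => f (g x), fun x => g' (f' x)). split; simpl; intro x.
  - rewrite K1. apply H1.
  - rewrite H2. apply K2.
Defined.

Definition sym_one : {p | isperm p}.
Proof. exists (fun x => x, fun x => x). split; reflexivity. Defined.

Definition sym_inv (p : {p | isperm p}) : {p | isperm p}.
Proof. destruct p as [[f f'] [H1 H2]]. exists (f', f). split; assumption. Defined.

Lemma sym_ext (p q : {p | isperm p}) :
  (forall x, fst (proj1_sig p) x = fst (proj1_sig q) x) -> p = q.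
Proof.
  destruct p as [[f f'] [H1 H2]], q as [[g g'] [K1 K2]]; simpl; intro E.
  assert (f = g) by (apply functional_extensionality, E). subst g.
  assert (f' = g').
  { apply functional_extensionality. intro x. rewrite <- (K1 x) at 1. apply H2. }
  subst g'. f_equal. apply proof_irrelevance.
Qed.

Definition Sym : group.
Proof.
  refine (@Group {p | isperm p} sym_mul sym_one sym_inv _ _ _ _ _);
  intros; apply sym_ext;
  repeat match goal with p : {p | isperm p} |- _ => destruct p as [[? ?] [? ?]] end;
  simpl; intros; auto.
Defined.

Definition mkperm (f f' : X -> X) (H1 : forall x, f (f' x) = x)
  (H2 : forall x, f' (f x) = x) : Sym := exist _ (f, f') (conj H1 H2).

Definition app (p : Sym) (x : X) : X := fst (proj1_sig p) x.
Definition appinv (p : Sym) (x : X) : X := snd (proj1_sig p) x.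

Lemma app_mkperm f f' H1 H2 x : app (mkperm f f' H1 H2) x = f x.
Proof. reflexivity. Qed.

Lemma app_mul (p q : Sym) x : app (gmul p q) x = app p (app q x).
Proof. destruct p as [[? ?] [? ?]], q as [[? ?] [? ?]]. reflexivity. Qed.

Lemma app_inv (p : Sym) x : app (ginv p) x = appinv p x.
Proof. destruct p as [[? ?] [? ?]]. reflexivity. Qed.

Lemma app_appinv (p : Sym) x : app p (appinv p x) = x.
Proof. destruct p as [[? ?] [? ?]]. unfold app, appinv. simpl. auto. Qed.

Lemma appinv_app (p : Sym) x : appinv p (app p x) = x.
Proof. destruct p as [[? ?] [? ?]]. unfold app, appinv. simpl. auto. Qed.

Lemma perm_ext (p q : Sym) : (forall x, app p x = app q x) -> p = q.
Proof. apply sym_ext. Qed.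

End Permutations.

Arguments mkperm {X}.
Arguments app {X}.
Arguments appinv {X}.

Section CosetNormalForms.
Context {A : group} (H : A -> Prop) (hH : is_subgroup H).

Definition coset_rep (a : A) : A :=
  if dec (H a) then gone else epsilon (inhabits gone) (fun b => H (gmul a (ginv b))).

Lemma coset_rep_spec a : H (gmul a (ginv (coset_rep a))).
Proof.
  unfold coset_rep. destruct (dec (H a)) as [h|h].
  - rewrite invg1, gmul1r. exact h.
  - apply (epsilon_spec (inhabits gone) (fun b => H (gmul a (ginv b)))).
    exists a. rewrite gmulVr. apply (subgroup1 hH).
Qed.

Lemma coset_rep_eq a b : H (gmul a (ginv b)) -> coset_rep a = coset_rep b.
Proof.
  intro hab. unfold coset_rep.
  assert (Hiff : forall x, H (gmul a x) <-> H (gmul b x)).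
  { intro x. split; intro hx.
    - replace (gmul b x) with (gmul (ginv (gmul a (ginv b))) (gmul a x))
        by (rewrite invgM, invgK, <- gmulA, mulKg; reflexivity).
      apply (subgroupM hH); [apply (subgroupV hH)|]; assumption.
    - replace (gmul a x) with (gmul (gmul a (ginv b)) (gmul b x))
        by (rewrite <- gmulA, mulKg; reflexivity).
      apply (subgroupM hH); assumption. }
  assert (Hab : H a <-> H b) by (rewrite <- (gmul1r a), <- (gmul1r b); apply Hiff).
  destruct (dec (H a)) as [ha|ha]; destruct (dec (H b)) as [hb|hb]; try tauto.
  f_equal. apply functional_extensionality. intro x. apply propositional_extensionality, Hiff.
Qed.

Lemma coset_rep_eq1 a : coset_rep a = gone <-> H a.
Proof.
  split.
  - intro E. pose proof (coset_rep_spec a) as h. rewrite E, invg1, gmul1r in h. exact h.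
  - intro h. unfold coset_rep. destruct (dec (H a)); tauto.
Qed.

Lemma coset_rep_id a : coset_rep (coset_rep a) = coset_rep a.
Proof.
  apply coset_rep_eq. pose proof (subgroupV hH _ (coset_rep_spec a)) as h.
  rewrite invgM, invgK in h. exact h.
Qed.

(* A pair (a0, [(e1, r1); ...; (en, rn)]) stands for the element
   a0 t^e1 r1 ... t^en rn of the HNN extension, with t^true = t and t^false = t^-1. *)
Fixpoint valid_nf (l : list (bool * A)) : Prop :=
  match l with
  | [] => True
  | (e, r) :: l' => coset_rep r = r /\
      match l' with [] => True | (e', _) :: _ => r = gone -> e' = e end /\ valid_nf l'
  end.

Definition tmul (e : bool) (p : A * list (bool * A)) : A * list (bool * A) :=
  let (a0, l) := p in
  if dec (H a0) then
    match l with
    | (e', r') :: l' => if Bool.eqb e' (negb e) then (gmul a0 r', l') else (a0, (e, gone) :: l)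
    | [] => (a0, [(e, gone)])
    end
  else (gmul a0 (ginv (coset_rep a0)), (e, coset_rep a0) :: l).

Lemma tmul_valid e p : valid_nf (snd p) -> valid_nf (snd (tmul e p)).
Proof.
  destruct p as [a0 l]. simpl. intro hv.
  assert (rep1 : coset_rep gone = gone) by apply coset_rep_eq1, (subgroup1 hH).
  destruct (dec (H a0)) as [ha|ha].
  - destruct l as [|[e' r'] l']; [simpl; tauto|].
    destruct (Bool.eqb e' (negb e)) eqn:Ee; [simpl in *; tauto|].
    simpl. split; [exact rep1|]. split; [|exact hv].
    intros _. destruct e, e'; simpl in Ee; congruence.
  - simpl. split; [apply coset_rep_id|]. split; [|exact hv].
    destruct l as [|[e' r'] l']; [exact I|].
    intro E. contradiction (ha (proj1 (coset_rep_eq1 a0) E)).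
Qed.

Lemma tmul_cons b s r l :
  H b -> valid_nf ((s, r) :: l) -> tmul s (gmul b r, l) = (b, (s, r) :: l).
Proof.
  intros hb [hr [hh hv]]. unfold tmul.
  destruct (dec (H (gmul b r))) as [h|h].
  - assert (Hr : r = gone).
    { rewrite <- hr. apply coset_rep_eq1.
      replace r with (gmul (ginv b) (gmul b r)) by apply mulKg.
      apply (subgroupM hH); [apply (subgroupV hH)|]; assumption. }
    subst r. rewrite gmul1r. destruct l as [|[e'' r''] l''].
    + reflexivity.
    + rewrite (hh eq_refl). destruct s; reflexivity.
  - assert (E : coset_rep (gmul b r) = r).
    { rewrite <- hr at 2. apply coset_rep_eq. rewrite <- gmulA, gmulVr, gmul1r. exact hb. }
    rewrite E, <- gmulA, gmulVr, gmul1r. reflexivity.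
Qed.

Lemma tmul_cancel b s e r l : H b -> e = negb s -> tmul s (b, (e, r) :: l) = (gmul b r, l).
Proof.
  intros hb ->. unfold tmul. destruct (dec (H b)) as [_|n]; [|contradiction].
  rewrite Bool.eqb_reflx. reflexivity.
Qed.

Lemma tmulK e p : valid_nf (snd p) -> tmul (negb e) (tmul e p) = p.
Proof.
  destruct p as [a0 l]. simpl snd. intro hv.
  assert (Ee : e = negb (negb e)) by (rewrite negb_involutive; reflexivity).
  unfold tmul at 2. destruct (dec (H a0)) as [ha|ha].
  - destruct l as [|[e' r'] l'].
    + rewrite tmul_cancel, gmul1r by assumption. reflexivity.
    + destruct (Bool.eqb e' (negb e)) eqn:Ee'.
      * apply Bool.eqb_prop in Ee'. subst e'. apply tmul_cons; assumption.
      * rewrite tmul_cancel, gmul1r by assumption. reflexivity.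
  - rewrite tmul_cancel by (apply coset_rep_spec || assumption). rewrite mulgKV. reflexivity.
Qed.

Definition lmul (h : A) (p : A * list (bool * A)) : A * list (bool * A) :=
  (gmul h (fst p), snd p).

Lemma tmul_conj h p : H h -> valid_nf (snd p) ->
  tmul false (lmul h (tmul true p)) = lmul h p.
Proof.
  destruct p as [a0 l]. intros hh hv. unfold lmul at 2. simpl fst; simpl snd.
  unfold tmul at 2. destruct (dec (H a0)) as [ha|ha].
  - destruct l as [|[e' r'] l'].
    + unfold lmul; cbn [fst snd]. rewrite tmul_cancel, gmul1r by
        (reflexivity || apply (subgroupM hH); assumption). reflexivity.
    + destruct (Bool.eqb e' (negb true)) eqn:Ee.
      * apply Bool.eqb_prop in Ee. subst e'. unfold lmul; cbn [fst snd].
        rewrite gmulA. apply tmul_cons; [apply (subgroupM hH)|]; assumption.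
      * unfold lmul; cbn [fst snd]. rewrite tmul_cancel, gmul1r by
          (reflexivity || apply (subgroupM hH); assumption). reflexivity.
  - unfold lmul; cbn [fst snd]. rewrite tmul_cancel by
      (reflexivity || (apply (subgroupM hH); [exact hh|apply coset_rep_spec])).
    rewrite <- !gmulA, gmulVl, gmul1r. reflexivity.
Qed.

End CosetNormalForms.

Section PairPermutations.
Context {X : Type} {G : group}.

Definition sym_pair_mul (s : Sym X) (x : G) : Sym (X * G).
Proof.
  refine (mkperm (fun wg => (app s (fst wg), gmul x (snd wg)))
                 (fun wg => (appinv s (fst wg), gmul (ginv x) (snd wg))) _ _);
  intros [w g]; simpl.
  - rewrite app_appinv, mulKVg. reflexivity.
  - rewrite appinv_app, mulKg. reflexivity.
Defined.

Definition sym_pair_cocycle (ev : X -> G) (s : Sym X) : Sym (X * G).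
Proof.
  refine (mkperm
    (fun wg => (app s (fst wg), gmul (ev (app s (fst wg))) (gmul (ginv (ev (fst wg))) (snd wg))))
    (fun wg => (appinv s (fst wg),
                gmul (ev (appinv s (fst wg))) (gmul (ginv (ev (fst wg))) (snd wg))))
    _ _); intros [w g]; simpl.
  - rewrite app_appinv, mulKg, mulKVg. reflexivity.
  - rewrite appinv_app, mulKg, mulKVg. reflexivity.
Defined.

End PairPermutations.

Definition nform {A : group} (H : A -> Prop) := {p : A * list (bool * A) | valid_nf H (snd p)}.

Lemma nform_eq {A : group} {H : A -> Prop} (w w' : nform H) :
  proj1_sig w = proj1_sig w' -> w = w'.
Proof. destruct w, w'. simpl. intros ->. f_equal. apply proof_irrelevance. Qed.

Section HNNNormalForm.
Context {A G : group} (H : A -> Prop) (hH : is_subgroup H) (i : A -> G) (t : G).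

Definition nform_lmul_fun (a : A) (w : nform H) : nform H :=
  exist _ (gmul a (fst (proj1_sig w)), snd (proj1_sig w)) (proj2_sig w).

Definition nform_tmul_fun (e : bool) (w : nform H) : nform H :=
  exist _ (tmul H e (proj1_sig w)) (tmul_valid H hH e _ (proj2_sig w)).

Definition nform_lmul (a : A) : Sym (nform H).
Proof.
  refine (mkperm (nform_lmul_fun a) (nform_lmul_fun (ginv a)) _ _);
  intro w; apply nform_eq; simpl; rewrite ?mulKVg, ?mulKg; destruct (proj1_sig w); reflexivity.
Defined.

Definition nform_tmul : Sym (nform H).
Proof.
  refine (mkperm (nform_tmul_fun true) (nform_tmul_fun false) _ _);
  intro w; apply nform_eq; apply (tmulK H hH), (proj2_sig w).
Defined.

Fixpoint eval_nf_list (l : list (bool * A)) : G :=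
  match l with
  | [] => gone
  | (e, r) :: l' => gmul (signg e t) (gmul (i r) (eval_nf_list l'))
  end.

Definition eval_nf (p : A * list (bool * A)) : G := gmul (i (fst p)) (eval_nf_list (snd p)).

Hypotheses (hi : is_hom i) (hrel : forall h, H h -> gmul (ginv t) (gmul (i h) t) = i h).

Lemma signg_t_commute e h : H h -> gmul (signg e t) (i h) = gmul (i h) (signg e t).
Proof.
  intro hh. specialize (hrel h hh).
  assert (E : gmul (i h) t = gmul t (i h)) by (rewrite <- hrel at 2; rewrite mulKVg; reflexivity).
  destruct e; simpl; [symmetry; exact E|].
  apply (mulg_injr t). rewrite <- (gmulA (i h)), gmulVl, gmul1r, <- gmulA. exact hrel.
Qed.

Lemma eval_tmul e p : eval_nf (tmul H e p) = gmul (signg e t) (eval_nf p).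
Proof.
  destruct p as [a0 l]. unfold tmul, eval_nf. destruct (dec (H a0)) as [ha|ha].
  - destruct l as [|[e' r'] l'].
    + simpl. rewrite (hom1 i hi), !gmul1l, !gmul1r, signg_t_commute by exact ha. reflexivity.
    + destruct (Bool.eqb e' (negb e)) eqn:Ee.
      * apply Bool.eqb_prop in Ee. subst e'. simpl. rewrite hi, !gmulA, signg_t_commute by exact ha.
        rewrite <- (gmulA (i a0) (signg e t)).
        replace (gmul (signg e t) (signg (negb e) t)) with (gone : G)
          by (destruct e; symmetry; [apply gmulVr|apply gmulVl]).
        rewrite gmul1r. reflexivity.
      * simpl. rewrite (hom1 i hi), gmul1l, !gmulA, signg_t_commute by exact ha. reflexivity.
  - simpl. rewrite !gmulA. f_equal.
    rewrite <- (signg_t_commute e (gmul a0 (ginv (coset_rep H a0)))) by apply (coset_rep_spec H hH).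
    rewrite <- gmulA, <- hi, mulgKV. reflexivity.
Qed.

Hypothesis (hG : is_special_HNN A H G i t).

(* On nform H * G, the actions (w, y) |-> (psi x w, x y) and
   (w, y) |-> (psi x w, ev (psi x w) (ev w)^-1 y) of G agree on the generators, hence are
   equal; their second coordinates give the formula. *)
Lemma hnn_nform_action : exists psi : G -> Sym (nform H), is_hom psi /\
  forall g w, eval_nf (proj1_sig (app (psi g) w)) = gmul g (eval_nf (proj1_sig w)).
Proof.
  destruct hG as [_ [_ [hU huniq]]].
  destruct (hU (Sym (nform H)) nform_lmul nform_tmul) as [psi [hpsi [hpsiA hpsiT]]].
  - intros a b. apply perm_ext. intro w. rewrite app_mul. apply nform_eq. simpl.
    rewrite gmulA. reflexivity.
  - intros h hh. apply perm_ext. intro w. rewrite !app_mul, app_inv. apply nform_eq.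
    exact (tmul_conj H hH h (proj1_sig w) hh (proj2_sig w)).
  - exists psi. split; [exact hpsi|].
    set (ev := fun w : nform H => eval_nf (proj1_sig w)).
    assert (hom1 : is_hom (fun x => sym_pair_mul (psi x) x)).
    { intros x y. apply perm_ext. intros [w g0]. rewrite app_mul. unfold sym_pair_mul.
      rewrite !app_mkperm. simpl. rewrite hpsi, app_mul, gmulA. reflexivity. }
    assert (hom2 : is_hom (fun x => sym_pair_cocycle ev (psi x))).
    { intros x y. apply perm_ext. intros [w g0]. rewrite app_mul. unfold sym_pair_cocycle.
      rewrite !app_mkperm. simpl. rewrite hpsi, app_mul. f_equal.
      rewrite !gmulA, mulgKV. reflexivity. }
    assert (Heq : forall x, sym_pair_mul (psi x) x = sym_pair_cocycle ev (psi x)).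
    { apply (huniq _ _ _ hom1 hom2).
      - intro a. apply perm_ext. intros [w g0]. unfold sym_pair_mul, sym_pair_cocycle.
        rewrite !app_mkperm. simpl. rewrite hpsiA. f_equal. unfold ev, eval_nf. simpl.
        rewrite hi, <- !gmulA, (gmulA (i (fst (proj1_sig w)))), mulKVg. reflexivity.
      - apply perm_ext. intros [w g0]. unfold sym_pair_mul, sym_pair_cocycle.
        rewrite !app_mkperm. simpl. rewrite hpsiT. f_equal. unfold ev. simpl.
        rewrite (eval_tmul true). simpl. rewrite <- !gmulA, mulKVg. reflexivity. }
    intros g w. pose proof (f_equal (fun s => snd (app s (w, gone))) (Heq g)) as Hg.
    unfold sym_pair_mul, sym_pair_cocycle in Hg. rewrite !app_mkperm in Hg. simpl in Hg.
    rewrite !gmul1r in Hg. change (ev (app (psi g) w) = gmul g (ev w)).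
    rewrite Hg at 2. rewrite mulgKV. reflexivity.
Qed.

Lemma hnn_normal_form g : g <> gone ->
  exists a0 l, valid_nf H l /\ g = gmul (i a0) (eval_nf_list l) /\ (l = [] -> a0 <> gone).
Proof.
  intro hg. destruct hnn_nform_action as [psi [_ hpsi]].
  set (e0 := exist (fun p => valid_nf H (snd p)) (gone, []) I : nform H).
  assert (Hev0 : eval_nf (proj1_sig e0) = gone) by (unfold eval_nf; simpl; rewrite (hom1 i hi); apply gmul1l).
  pose proof (hpsi g e0) as E. rewrite Hev0, gmul1r in E.
  destruct (app (psi g) e0) as [[a0 l] hv]. simpl in E.
  exists a0, l. split; [exact hv|]. split; [symmetry; exact E|].
  intros -> ->. apply hg. rewrite <- E. unfold eval_nf. simpl. rewrite (hom1 i hi). apply gmul1l.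
Qed.

End HNNNormalForm.

(** * Mapping the HNN extension into a wreath product *)

Lemma wr_base_isomorphic (P Q K : group) : same_card Q K ->
  isomorphic (subgrp (proj1 (@wr_base_normal P K))) (subgrp (proj1 (@wr_base_normal P Q))).
Proof.
  intros [beta [hbi hbs]].
  pose (gam k := proj1_sig (constructive_indefinite_description _ (hbs k))).
  assert (Hbg : forall k, beta (gam k) = k)
    by (intro k; exact (proj2_sig (constructive_indefinite_description _ (hbs k)))).
  assert (Hgb : forall x, gam (beta x) = x) by (intro x; apply hbi, Hbg).
  exists (fun a => exist (fun b : wr P Q => snd b = gone)
                     (fun x => fst (proj1_sig a) (beta x), gone) eq_refl).
  split; [|split].
  - intros [a ha] [b hb]. apply sub_eq. simpl. unfold wr_mul. simpl. f_equal.
    + apply functional_extensionality. intro x. rewrite ha, !gmul1r. reflexivity.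
    + symmetry. apply gmul1l.
  - intros [[a1 a2] ha] [[b1 b2] hb] E. apply sub_eq. simpl in *. subst a2 b2. f_equal.
    apply functional_extensionality. intro k. rewrite <- (Hbg k).
    exact (f_equal (fun p => fst (proj1_sig p) (gam k)) E).
  - intros [[b1 b2] hb]. simpl in hb. subst b2.
    exists (exist (fun a : wr P K => snd a = gone) (fun k => b1 (gam k), gone) eq_refl).
    apply sub_eq. simpl. f_equal. apply functional_extensionality. intro x.
    rewrite Hgb. reflexivity.
Qed.

Lemma wr_in_class (C R : group -> Prop) (hR : root_class R)
  (h2 : forall G, ext_by R C G -> C G) (h3 : forall G, C G -> exists K, R K /\ same_card G K)
  (P Q : group) : R P -> C Q -> C (wr P Q).
Proof.
  intros hP hQ. pose proof hR as [hRiso [_ [hRs _]]].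
  destruct (h3 Q hQ) as [K [hK hQK]].
  apply h2. exists (fun a : wr P Q => snd a = gone), wr_base_normal.
  split; [|apply wr_quotient_base, hQ].
  apply (hRiso _ _ (wr_base_isomorphic P Q K hQK)), hRs, (root_class_wr R hR); assumption.
Qed.

Section HNNIntoWreath.
Context {A Q : group} (H : A -> Prop) (hH : is_subgroup H) (f : A -> Q) (hf : is_hom f).

Definition coset_choice (x : Q) : Q :=
  epsilon (inhabits gone) (fun z => exists h, H h /\ z = gmul x (f h)).

Lemma coset_choice_spec x : exists h, H h /\ coset_choice x = gmul x (f h).
Proof.
  apply (epsilon_spec (inhabits gone) (fun z => exists h, H h /\ z = gmul x (f h))).
  exists x, gone. split; [apply (subgroup1 hH)|]. rewrite (hom1 f hf), gmul1r. reflexivity.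
Qed.

Lemma coset_choice_mul x h : H h -> coset_choice (gmul x (f h)) = coset_choice x.
Proof.
  intro hh. unfold coset_choice. f_equal. apply functional_extensionality. intro z.
  apply propositional_extensionality. split; intros [h' [hh' ->]].
  - exists (gmul h h'). split; [apply (subgroupM hH); assumption|].
    rewrite hf, gmulA. reflexivity.
  - exists (gmul (ginv h) h'). split; [apply (subgroupM hH); [apply (subgroupV hH)|]; assumption|].
    rewrite hf, (homV f hf), <- (gmulA x), mulKVg. reflexivity.
Qed.

(* The letters of the word are the chosen representatives of the cosets y f(H) visited by
   the stable letter when the normal form acts on Q. *)
Fixpoint nf_word (y : Q) (l : list (bool * A)) : list (Q * bool) :=
  match l with
  | [] => []
  | (e, r) :: l' => (coset_choice y, e) :: nf_word (gmul y (f r)) l'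
  end.

Lemma nf_word_reduced l : valid_nf H l ->
  (forall e r h, In (e, r) l -> H h -> gmul (ginv h) r <> gone -> f (gmul (ginv h) r) <> gone) ->
  forall y, reduced (nf_word y l).
Proof.
  induction l as [|[e r] l IH]; intros hv hsep y; simpl; [exact I|].
  destruct hv as [hr [hh hv]].
  split; [|apply IH; [exact hv|intros e' r' h' hin; apply (hsep e' r' h' (or_intror hin))]].
  destruct l as [|[e' r'] l']; [exact I|]. simpl. intros [E1 E2].
  destruct (classic (r = gone)) as [Er|Er].
  - rewrite (hh Er) in E2. destruct e; discriminate.
  - destruct (coset_choice_spec y) as [h1 [hh1 E3]].
    destruct (coset_choice_spec (gmul y (f r))) as [h2 [hh2 E4]].
    rewrite E3, E4, <- gmulA in E1. apply mulg_injl in E1.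
    assert (hnr : ~ H r) by (intro hr'; apply Er; rewrite <- hr; apply (coset_rep_eq1 H hH), hr').
    set (h := gmul h1 (ginv h2)).
    assert (hhh : H h) by (apply (subgroupM hH); [|apply (subgroupV hH)]; assumption).
    apply (hsep e r h (or_introl eq_refl) hhh).
    + intro E. apply hnr. apply mulg_eq1_invr in E. rewrite invgK in E. rewrite E. exact hhh.
    + assert (Efr : f h = f r) by (unfold h; rewrite hf, (homV f hf), E1, mulgK; reflexivity).
      rewrite hf, (homV f hf), Efr. apply gmulVl.
Qed.

Variables (P : group) (mu : Q -> P).

Definition wr_stable : wr P Q := (fun x => mu (coset_choice x), gone).

Lemma hnn_into_wr (G : group) (i : A -> G) (t : G) : is_special_HNN A H G i t ->
  exists phi : G -> wr P Q, is_hom phi /\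
    (forall a, phi (i a) = (fun _ => gone, f a)) /\ phi t = wr_stable.
Proof.
  intros [_ [_ [hU _]]]. apply hU.
  - intros a b. simpl. unfold wr_mul. simpl. rewrite hf. f_equal.
    apply functional_extensionality. intro. symmetry. apply gmul1l.
  - intros h hh. simpl. unfold wr_mul, wr_inv. simpl. f_equal.
    + apply functional_extensionality. intro x. rewrite !invg1, !gmul1r, gmul1l.
      rewrite (coset_choice_mul x h hh). apply gmulVl.
    + rewrite invg1, gmul1l, gmul1r. reflexivity.
Qed.

Lemma hom_wr_eval_nf_list (G : group) (i : A -> G) (t : G) (phi : G -> wr P Q) :
  is_hom phi -> (forall a, phi (i a) = (fun _ => gone, f a)) -> phi t = wr_stable ->
  forall l y, fst (phi (eval_nf_list i t l)) y = eval_word mu (nf_word y l).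
Proof.
  intros hphi hA hT. induction l as [|[e r] l IH]; intro y; simpl.
  - rewrite (hom1 phi hphi). reflexivity.
  - rewrite !hphi, hA, <- IH.
    destruct e; simpl; rewrite ?(homV phi hphi), hT; simpl;
      rewrite ?invg1, ?gmul1l, ?gmul1r; reflexivity.
Qed.

End HNNIntoWreath.

Lemma hnn_element_detected (C R : group -> Prop) (hR : root_class R)
  (h2 : forall G, ext_by R C G -> C G) (h3 : forall G, C G -> exists K, R K /\ same_card G K)
  {A Q G : group} (H : A -> Prop) (hH : is_subgroup H) (i : A -> G) (t : G)
  (hG : is_special_HNN A H G i t) (f : A -> Q) (hf : is_hom f) (hQ : C Q) a0 l :
  valid_nf H l -> (l = [] -> f a0 <> gone) ->
  (forall e r h, In (e, r) l -> H h -> gmul (ginv h) r <> gone -> f (gmul (ginv h) r) <> gone) ->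
  exists W, C W /\ exists phi : G -> W, is_hom phi /\
    phi (gmul (i a0) (eval_nf_list i t l)) <> gone.
Proof.
  intros hv hl0 hsep.
  assert (HP : exists P, R P /\ exists mu : Q -> P,
             l <> [] -> eval_word mu (nf_word H f gone l) <> gone).
  { destruct l as [|[e r] l'].
    - pose proof hR as [_ [[P0 [HP0 _]] _]].
      exists P0. split; [exact HP0|]. exists (fun _ => gone). contradiction.
    - destruct (reduced_word_separated R hR Q (nf_word H f gone ((e, r) :: l')))
        as [P [hP [mu hmu]]]; [discriminate|apply (nf_word_reduced H hH f hf); assumption|].
      exists P. split; [exact hP|]. exists mu. intros _. exact hmu. }
  destruct HP as [P [hP [mu hmu]]].
  destruct (hnn_into_wr H hH f hf P mu G i t hG) as [phi [hphi [hphiA hphiT]]].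
  exists (wr P Q). split; [apply (wr_in_class C R); assumption|].
  exists phi. split; [exact hphi|]. rewrite hphi, hphiA. intro E.
  destruct l as [|er l'].
  - apply (hl0 eq_refl). simpl in E. rewrite (hom1 phi hphi) in E.
    pose proof (f_equal snd E) as E2. simpl in E2. rewrite gmul1r in E2. exact E2.
  - (* the coordinate at f(a0)^-1 of the image is the image of the word starting at 1 *)
    apply hmu; [discriminate|].
    rewrite <- (hom_wr_eval_nf_list H f P mu G i t phi hphi hphiA hphiT).
    pose proof (f_equal (fun p : wr P Q => fst p (ginv (f a0))) E) as E1. simpl in E1.
    rewrite gmul1l, gmulVl in E1. exact E1.
Qed.

Theorem corollary4p3 (C R : group -> Prop)
  (hCiso : iso_closed C) (hR : root_class R) (hRC : forall G, R G -> C G)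
  (h1s : subgroup_closed C) (h1p : product_closed C)
  (h2 : forall G, ext_by R C G -> C G)
  (h3 : forall G, C G -> exists K, R K /\ same_card G K)
  (A : group) (H : A -> Prop) (hH : finite_subgroup H) (hA : residually C A)
  (G : group) (i : A -> G) (t : G) (hG : is_special_HNN A H G i t) :
  residually C G.
Proof.
  destruct hH as [hHs [Hl HHl]].
  pose proof hG as [hi [hrel _]].
  pose proof hR as [_ [[T [hT _]] _]].
  apply (residually_of_homs C h1s). intros g hg.
  destruct (hnn_normal_form H hHs i t hi hrel hG g hg) as [a0 [l [hv [-> hl0]]]].
  set (S := a0 :: flat_map (fun h => map (fun er => gmul (ginv h) (snd er)) l) Hl).
  destruct (residually_separates_list C h1s h1p A T (hRC T hT) hA S)
    as [Q [hQ [f [hf hfS]]]].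
  apply (hnn_element_detected C R hR h2 h3 H hHs i t hG f hf hQ a0 l hv).
  - intro El. apply hfS; [left; reflexivity|exact (hl0 El)].
  - intros e r h hin hh hn. apply hfS; [|exact hn]. right.
    apply in_flat_map. exists h. split; [apply HHl, hh|].
    apply in_map_iff. exists (e, r). split; [reflexivity|exact hin].
Qed.
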